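(* Consider the control system $\dot x=f(x,u)$, where $f\colon\mathcal{X}\times\mathcal{U}\to\mathbb{R}^n$ is continuous on a neighborhood $\mathcal{X}\times\mathcal{U}\subseteq\mathbb{R}^n\times\mathbb{R}^m$ of the origin with $f(0,0)=0$, let $d$ be a nonnegative function on a neighborhood of $0\in\mathbb{R}^n$, and suppose the system is locally asymptotically stabilizable and $u$ is a stabilizing feedback with $\|u(x)\|\le d(x)$ for all sufficiently small $\|x\|$. Write $F_u(x):=f(x,u(x))$, $$g_f(r):=\Gamma_0\big(f(\mathbb{B}_r(0,0))\big),\quad g_{F_u}(r):=\Gamma_0\big(F_u(\mathbb{B}_r(0))\big),\quad h(r):=\sup_{y\in\mathbb{B}_r(0)}\|F_u^{-1}(y)\|.$$ Then $$g_{F_u}\big(h(r)\big)\ \le\ g_f\left(\sqrt{\|d\|^2_{\mathbb{B}_{h(r)}(0)}+h(r)^2}\right)\quad\text{for all sufficiently small } r>0.$$ Moreover, $g_{F_u}(h(r))\ge r$ for all sufficiently small $r>0$, so that this condition implies $r\le g_f\big(\sqrt{\|d\|^2_{\mathbb{B}_{h(r)}(0)}+h(r)^2}\big)$ for all sufficiently small $r>0$.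
   Context: $\mathbb{B}_r(z)$ denotes the open ball of radius $r$ centered at $z$; on $\mathbb{R}^n\times\mathbb{R}^m$ the norm is $\|(x,u)\|=\sqrt{\|x\|^2+\|u\|^2}$. The inradius of a set $K$ at $z^*$ is $\Gamma_{z^*}(K)=\sup\{\rho\ge0:\mathbb{B}_\rho(z^* )\subseteq K\}$; $\|d\|_{\mathbb{B}_\rho(0)}:=\sup_{x\in\mathbb{B}_\rho(0)}d(x)$. A stabilizing feedback is a map $u\colon\mathcal{O}\to\mathcal{U}$ on a neighborhood $\mathcal{O}$ of the origin with $u(0)=0$ such that the origin is a locally asymptotically stable equilibrium of $\dot x=f(x,u(x))$, with $x\mapsto f(x,u(x))$ continuous and $\dot x=f(x,u(x))$ having a unique solution for all $t$ from every initial condition near the origin; the system is locally asymptotically stabilizable if such $u$ exists. For such $u$, $F_u$ restricted to a suitable neighborhood of the origin is a homeomorphism onto a neighborhood of the origin, and $F_u^{-1}$ denotes this local inverse. *)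

From HB Require Import structures.
From mathcomp Require Import all_boot all_order all_algebra.
From mathcomp Require Import all_classical all_reals all_analysis.
Set Implicit Arguments. Unset Strict Implicit. Unset Printing Implicit Defensive.
Import Order.TTheory GRing.Theory Num.Theory.
Import numFieldNormedType.Exports.
Local Open Scope classical_set_scope.
Local Open Scope ring_scope.

Section Defs.
Variable R : realType.

Definition enorm (k : nat) (x : 'rV[R]_k) : R :=
  Num.sqrt (\sum_(i < k) x ord0 i ^+ 2).

Definition pnorm (n m : nat) (z : 'rV[R]_n * 'rV[R]_m) : R :=
  Num.sqrt (enorm z.1 ^+ 2 + enorm z.2 ^+ 2).

Definition eball (k : nat) (e : \bar R) : set 'rV[R]_k :=
  [set x | ((enorm x)%:E < e)%E].
Definition pball (n m : nat) (e : \bar R) : set ('rV[R]_n * 'rV[R]_m) :=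
  [set z | ((pnorm z)%:E < e)%E].

Definition inradius0 (k : nat) (K : set 'rV[R]_k) : \bar R :=
  ereal_sup [set (rho%:E)%E | rho in [set rho : R | 0 <= rho /\ @eball k rho%:E `<=` K]].

(* g_f(r) = Gamma_0 (f (B_r(0,0))) ; f only defined on X x U. *)
Definition g_f (n m : nat) (X : set 'rV[R]_n) (U : set 'rV[R]_m)
  (f : 'rV[R]_n * 'rV[R]_m -> 'rV[R]_n) (r : \bar R) : \bar R :=
  inradius0 (f @` (@pball n m r `&` (X `*` U))).

Definition Fu (n m : nat) (f : 'rV[R]_n * 'rV[R]_m -> 'rV[R]_n)
  (u : 'rV[R]_n -> 'rV[R]_m) (x : 'rV[R]_n) : 'rV[R]_n := f (x, u x).

(* g_{F_u}(r) = Gamma_0 (F_u (B_r(0))) ; F_u only defined on O. *)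
Definition g_Fu (n m : nat) (O : set 'rV[R]_n)
  (f : 'rV[R]_n * 'rV[R]_m -> 'rV[R]_n) (u : 'rV[R]_n -> 'rV[R]_m)
  (r : \bar R) : \bar R :=
  inradius0 (Fu f u @` (@eball n r `&` O)).

(* h(r) = sup_{y in B_r(0)} |F_u^{-1}(y)|, G the local inverse defined on W. *)
Definition h_inv (n : nat) (W : set 'rV[R]_n) (G : 'rV[R]_n -> 'rV[R]_n)
  (r : R) : \bar R :=
  ereal_sup [set ((enorm (G y))%:E)%E | y in @eball n r%:E `&` W].

(* ||d||_{B_rho(0)} = sup_{x in B_rho(0)} d(x), d defined on D. *)
Definition dsup (n : nat) (D : set 'rV[R]_n) (d : 'rV[R]_n -> R)
  (rho : \bar R) : \bar R :=
  ereal_sup [set ((d x)%:E)%E | x in @eball n rho `&` D].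

Definition esqrt_sumsq (a b : \bar R) : \bar R :=
  match a, b with
  | EFin a, EFin b => (Num.sqrt (a ^+ 2 + b ^+ 2))%:E
  | _, _ => +oo%E
  end.

Definition is_solution (n : nat) (O : set 'rV[R]_n) (F : 'rV[R]_n -> 'rV[R]_n)
  (x0 : 'rV[R]_n) (phi : R -> 'rV[R]_n) : Prop :=
  [/\ phi 0 = x0,
      (forall t : R, 0 <= t -> O (phi t)),
      {within [set t : R | 0 <= t], continuous phi} &
      (forall t : R, 0 < t -> is_derive t (1 : R) phi (F (phi t)))].

Definition stable_dynamics (n : nat) (O : set 'rV[R]_n)
  (F : 'rV[R]_n -> 'rV[R]_n) : Prop :=
  [/\
      (exists2 rho : R, 0 < rho & forall x0, enorm x0 < rho ->
         (exists phi, is_solution O (F) x0 phi) /\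
         (forall phi1 phi2, is_solution O (F) x0 phi1 ->
            is_solution O (F) x0 phi2 -> forall t, 0 <= t -> phi1 t = phi2 t)),
      (forall eps : R, 0 < eps -> exists2 delta : R, 0 < delta &
         forall x0 phi, enorm x0 < delta -> is_solution O (F) x0 phi ->
           forall t, 0 <= t -> enorm (phi t) < eps) &
      (exists2 eta : R, 0 < eta &
         forall x0 phi, enorm x0 < eta -> is_solution O (F) x0 phi ->
           forall eps : R, 0 < eps -> exists T : R, forall t, T <= t ->
             enorm (phi t) < eps)].



Definition stabilizing_feedback (n m : nat) (X : set 'rV[R]_n)
  (U : set 'rV[R]_m) (f : 'rV[R]_n * 'rV[R]_m -> 'rV[R]_n)
  (O : set 'rV[R]_n) (u : 'rV[R]_n -> 'rV[R]_m) : Prop :=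
  [/\ open O /\ O 0, O `<=` X, (forall x, O x -> U (u x)) /\ u 0 = 0,
      {within O, continuous (Fu f u)} &
      stable_dynamics O (Fu f u)].
End Defs.

(* The first inequality is monotonicity of the inradius: for [x] in the ball
   of radius [h(r)] inside [O], the bound [|u x| <= d x] gives
   [|(x, u x)|^2 < ||d||^2 + h(r)^2], so [F_u] maps that ball into the image
   under [f] of the larger product ball.  For the lower bound, every [y] with
   [|y| < r] equals [F_u (G y)], and [|G y| < h(r)] strictly: the norm has no
   local maximum, so [G y] can be pushed slightly outward while, by continuity
   of [F_u], its image stays in the ball of radius [r], and [G] maps that image
   back to the pushed point.  Hence the ball of radius [r] lies in
   [F_u (B_{h(r)})]. *)

From HB Require Import structures.
From mathcomp Require Import all_boot all_order all_algebra.
From mathcomp Require Import all_classical all_reals all_analysis.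
From mathcomp.algebra_tactics Require Import lra.
Import Order.TTheory GRing.Theory Num.Theory.
Import numFieldNormedType.Exports.
Local Open Scope classical_set_scope.
Local Open Scope ring_scope.

Section EuclideanNorm.
Context {R : realType} {n : nat}.
Implicit Types (x y : 'rV[R]_n) (A : set 'rV[R]_n) (F : 'rV[R]_n -> 'rV[R]_n).

Lemma enorm_ge0 x : 0 <= enorm x.
Proof. exact: sqrtr_ge0. Qed.

Lemma eballE (r : R) : eball r%:E = [set x : 'rV[R]_n | enorm x < r].
Proof. by apply/seteqP; split => x; rewrite /eball /= lte_fin. Qed.

Lemma enorm0 : enorm (0 : 'rV[R]_n) = 0.
Proof. by rewrite /enorm big1 ?sqrtr0 // => i _; rewrite mxE expr0n. Qed.

Lemma enormZ (c : R) x : enorm (c *: x) = `|c| * enorm x.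
Proof.
rewrite /enorm -sqrtr_sqr -sqrtrM ?sqr_ge0 // mulr_sumr; congr Num.sqrt.
by apply: eq_bigr => i _; rewrite mxE exprMn.
Qed.

Lemma coord_le_enorm x i : `|x ord0 i| <= enorm x.
Proof.
rewrite /enorm -sqrtr_sqr ler_sqrt; last by apply: sumr_ge0 => j _; exact: sqr_ge0.
by rewrite (bigD1 i) //= lerDl; apply: sumr_ge0 => j _; exact: sqr_ge0.
Qed.

Lemma normr_le_enorm x : `|x| <= enorm x.
Proof.
rewrite (_ : `|x| = mx_norm x) // mx_normrE.
apply: bigmax_le => [|[i j] _]; first exact: enorm_ge0.
by rewrite /= (ord1 i); exact: coord_le_enorm.
Qed.

Lemma enorm_continuous : continuous (@enorm R n).
Proof.
have sum_cont : continuous (fun y : 'rV[R]_n => \sum_(i < n) y ord0 i ^+ 2).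
  have add_cont : continuous (fun z : R * R => z.1 + z.2) by exact: add_continuous.
  apply: (@continuous_big R 'I_n +%R 0 predT add_cont) => i _ y.
  apply: (@continuous_comp _ _ _ (fun y : 'rV[R]_n => y ord0 i) (fun t : R => t ^+ 2)).
    exact: coord_continuous.
  exact: exprn_continuous.
move=> x.
exact: (@continuous_comp _ _ _ _ (@Num.sqrt R) x (sum_cont x) (@sqrt_continuous R _)).
Qed.

Lemma exists_enorm1 : (0 < n)%N -> exists v : 'rV[R]_n, enorm v = 1.
Proof.
move=> n_gt0; exists (delta_mx 0 (Ordinal n_gt0)).
rewrite /enorm (bigD1 (Ordinal n_gt0)) //= big1 ?addr0 ?mxE ?eqxx ?expr1n ?sqrtr1 //.
by move=> j /negbTE j_neq; rewrite mxE eq_sym j_neq andbF expr0n.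
Qed.

Lemma nbhs0_enorm_lt {A} : nbhs (0 : 'rV[R]_n) A ->
  exists2 e : R, 0 < e & forall y, enorm y < e -> A y.
Proof.
move=> /nbhs_ballP[e e_gt0 ballA]; exists e => // y ye.
by apply: ballA; rewrite -ball_normE /= sub0r normrN (le_lt_trans (normr_le_enorm y)).
Qed.

Lemma near_enorm_lt {x} {c : R} : enorm x < c -> \forall y \near x, enorm y < c.
Proof. exact: cvgr_lt (enorm_continuous x) c. Qed.

Lemma near_within_enorm_lt {A F x} {c : R} :
  {within A, continuous F} -> A x -> enorm (F x) < c ->
  \forall y \near x, A y -> enorm (F y) < c.
Proof.
move=> /subspace_continuousP F_cont Ax.
have FxF : (@enorm R n \o F) @ within A (nbhs x) --> enorm (F x).
  exact: cvg_comp (F_cont x Ax) (enorm_continuous (F x)).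
exact: cvgr_lt FxF c.
Qed.

(* In dimension 0 the only point is a local maximum. *)
Lemma enorm_nolocmax {x A} : (0 < n)%N -> nbhs x A ->
  exists2 x', A x' & enorm x < enorm x'.
Proof.
move=> n_gt0 /nbhs_ballP[e /= e_gt0 ballA].
have near_x y : `|y| < e -> A (x + y).
  by move=> ye; apply: ballA; rewrite -ball_normE /= opprD addrA subrr add0r normrN.
have [x0|x_neq0] := eqVneq x 0.
  have [v v1] := exists_enorm1 n_gt0.
  have e2_gt0 : 0 < e / 2 by rewrite divr_gt0.
  have e2_lt : e / 2 < e by lra.
  have ev : enorm ((e / 2) *: v) = e / 2 by rewrite enormZ v1 mulr1 gtr0_norm.
  exists (x + (e / 2) *: v); last by rewrite x0 add0r enorm0 ev.
  by apply: near_x; rewrite (le_lt_trans (normr_le_enorm _)) // ev.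
have x_gt0 : 0 < `|x| by rewrite normr_gt0.
have ex_gt0 : 0 < enorm x := lt_le_trans x_gt0 (normr_le_enorm x).
pose t := e / 2 / `|x|.
have t_gt0 : 0 < t by rewrite !divr_gt0.
exists (x + t *: x).
  by apply: near_x; rewrite normrZ gtr0_norm // /t divfK ?gt_eqF //; lra.
have -> : x + t *: x = (1 + t) *: x by rewrite scalerDl scale1r.
rewrite enormZ ger0_norm; nra.
Qed.

End EuclideanNorm.

Section Inradius.
Context {R : realType} {k : nat}.
Implicit Types K : set 'rV[R]_k.

Lemma le_inradius0 K1 K2 : K1 `<=` K2 -> (inradius0 K1 <= inradius0 K2)%E.
Proof.
move=> K12; apply: ereal_sup_le => _ [rho [rho_ge0 ballK1] <-].
by exists rho => //; split => //; exact: subset_trans K12.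
Qed.

Lemma inradius0_ge K (rho : R) : 0 <= rho -> eball rho%:E `<=` K ->
  (rho%:E <= inradius0 K)%E.
Proof. by move=> rho_ge0 ballK; apply: ereal_sup_ubound; exists rho. Qed.

End Inradius.

Lemma pnorm_lt_esqrt_sumsq {R : realType} {n m : nat}
    (z : 'rV[R]_n * 'rV[R]_m) (a b : \bar R) :
  ((enorm z.1)%:E < b)%E -> ((enorm z.2)%:E <= a)%E ->
  ((pnorm z)%:E < esqrt_sumsq a b)%E.
Proof.
case: a b => [a| |] [b| |] //=; rewrite ?ltry // lte_fin lee_fin => z1b z2a.
have z1_ge0 := enorm_ge0 z.1; have z2_ge0 := enorm_ge0 z.2.
rewrite lte_fin ltr_sqrt; nra.
Qed.

Lemma h_inv_le {R : realType} {n : nat} (W : set 'rV[R]_n)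
    (G : 'rV[R]_n -> 'rV[R]_n) (r c : R) :
  (forall y, enorm y < r -> W y -> enorm (G y) <= c) -> (h_inv W G r <= c%:E)%E.
Proof.
move=> Gc; apply: ge_ereal_sup => _ [y [yr Wy] <-].
by rewrite lee_fin; apply: Gc => //; move: yr; rewrite eballE.
Qed.

Section Feedback.
Context {R : realType} {n m : nat}.
Variables (X : set 'rV[R]_n) (U : set 'rV[R]_m)
  (f : 'rV[R]_n * 'rV[R]_m -> 'rV[R]_n) (O : set 'rV[R]_n)
  (u : 'rV[R]_n -> 'rV[R]_m).

Lemma le_g_Fu_g_f (a h : \bar R) : O `<=` X -> (forall x, O x -> U (u x)) ->
  (forall x, eball h x -> O x -> ((enorm (u x))%:E <= a)%E) ->
  (g_Fu O f u h <= g_f X U f (esqrt_sumsq a h))%E.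
Proof.
move=> OX uU ua; apply: le_inradius0 => _ [x [xh Ox] <-].
exists (x, u x) => //; split; last by split; [exact: OX | exact: uU].
exact: (@pnorm_lt_esqrt_sumsq _ _ _ (x, u x)) xh (ua x xh Ox).
Qed.

Variables (V W : set 'rV[R]_n) (G : 'rV[R]_n -> 'rV[R]_n).
Hypotheses (n_gt0 : (0 < n)%N) (VO : V `<=` O)
  (Fu_cont : {within O, continuous Fu f u})
  (G_Fu : forall x, V x -> G (Fu f u x) = x)
  (Fu_G : forall y, W y -> Fu f u (G y) = y).

(* Push [x] slightly outward inside [V]: its image stays in the ball and [G]
   maps that image back to the pushed point. *)
Lemma enorm_lt_h_inv (r : R) x : eball r%:E `<=` W -> nbhs x V ->
  enorm (Fu f u x) < r -> ((enorm x)%:E < h_inv W G r)%E.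
Proof.
move=> ballW Vx Fxr.
have Fu_near := near_within_enorm_lt Fu_cont (VO _ (nbhs_singleton Vx)) Fxr.
have [x' [Vx' Fx'r] x_lt] := enorm_nolocmax n_gt0 (filterI Vx Fu_near).
apply: (@lt_le_trans _ _ (enorm x')%:E); first by rewrite lte_fin.
have Bx' : eball r%:E (Fu f u x') by rewrite eballE; exact: Fx'r (VO _ Vx').
apply: ereal_sup_ubound; exists (Fu f u x'); last by rewrite G_Fu.
by split => //; exact: ballW.
Qed.

Lemma le_g_Fu_h_inv (r : R) : 0 <= r -> eball r%:E `<=` W ->
  (forall y, eball r%:E y -> nbhs (G y) V) ->
  (r%:E <= g_Fu O f u (h_inv W G r))%E.
Proof.
move=> r_ge0 ballW GV; apply: inradius0_ge => // y yr.
have FGy := Fu_G _ (ballW _ yr).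
exists (G y) => //; split; last exact: VO _ (nbhs_singleton (GV y yr)).
by apply: enorm_lt_h_inv ballW (GV y yr) _; rewrite FGy; move: yr; rewrite eballE.
Qed.

End Feedback.

Theorem theorem6 (R : realType) (n m : nat) (n_gt0 : (0 < n)%N)
  (X : set 'rV[R]_n) (U : set 'rV[R]_m)
  (f : 'rV[R]_n * 'rV[R]_m -> 'rV[R]_n)
  (D : set 'rV[R]_n) (d : 'rV[R]_n -> R)
  (O : set 'rV[R]_n) (u : 'rV[R]_n -> 'rV[R]_m)
  (V W : set 'rV[R]_n) (G : 'rV[R]_n -> 'rV[R]_n) :
  open X -> X 0 -> open U -> U 0 ->
  {within X `*` U, continuous f} -> f (0, 0) = 0 ->
  open D -> D 0 -> (forall x, D x -> 0 <= d x) ->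
  stabilizing_feedback X U f O u ->
  (exists2 rho : R, 0 < rho & forall x, enorm x < rho -> enorm (u x) <= d x) ->
  (* F_u restricted to the neighborhood V is a homeomorphism onto the
     neighborhood W, with inverse G = F_u^{-1} *)
  nbhs (0 : 'rV[R]_n) V -> V `<=` O -> nbhs (0 : 'rV[R]_n) W ->
  (forall x, V x -> W (Fu f u x)) -> (forall y, W y -> V (G y)) ->
  (forall x, V x -> G (Fu f u x) = x) -> (forall y, W y -> Fu f u (G y) = y) ->
  {within W, continuous G} ->
  exists2 r0 : R, 0 < r0 & forall r : R, 0 < r < r0 ->
    [/\ (g_Fu O f u (h_inv W G r)
           <= g_f X U f (esqrt_sumsq (dsup D d (h_inv W G r)) (h_inv W G r)))%E,
        (r%:E <= g_Fu O f u (h_inv W G r))%E &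
        (r%:E <= g_f X U f (esqrt_sumsq (dsup D d (h_inv W G r)) (h_inv W G r)))%E].
Proof.
move=> _ _ _ _ _ f00 oD D0 _ [[_ _] OX [uU u0] Fu_cont _] [rho rho_gt0 u_le_d].
move=> Vn VO Wn _ _ G_Fu Fu_G G_cont.
have Fu0 : Fu f u 0 = 0 by rewrite /Fu u0.
have G0 : G 0 = 0 by rewrite -{1}Fu0 G_Fu //; exact: nbhs_singleton Vn.
have rho_near : \forall x \near (0 : 'rV[R]_n), enorm x < rho.
  by apply: near_enorm_lt; rewrite enorm0.
have Dn : nbhs (0 : 'rV[R]_n) D by exact: open_nbhs_nbhs.
have [d0 d0_gt0 d0_ball] :=
  nbhs0_enorm_lt (filterI (filterI (nbhs_interior Vn) Dn) rho_near).
have [r0 r0_gt0 r0_ball] : exists2 r0 : R, 0 < r0 &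
    forall y, enorm y < r0 -> W y /\ (W y -> enorm (G y) < d0).
  apply: nbhs0_enorm_lt; apply: (filterI Wn).
  by apply: near_within_enorm_lt G_cont (nbhs_singleton Wn) _; rewrite G0 enorm0.
exists r0 => // r /andP[r_gt0 r_lt_r0].
have G_small y : enorm y < r -> W y /\ enorm (G y) < d0.
  by move=> /lt_trans /(_ r_lt_r0) /r0_ball [Wy /(_ Wy)].
have ballW : eball r%:E `<=` W by move=> y; rewrite eballE => /G_small[].
have h_le_d0 : (h_inv W G r <= d0%:E)%E.
  by apply: h_inv_le => y /G_small[_ /ltW].
have lower : (r%:E <= g_Fu O f u (h_inv W G r))%E.
  apply: (le_g_Fu_h_inv f O u V W G) => //; first exact: ltW.
  by move=> y; rewrite eballE => /G_small[_ /d0_ball[[]]].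
have upper : (g_Fu O f u (h_inv W G r)
    <= g_f X U f (esqrt_sumsq (dsup D d (h_inv W G r)) (h_inv W G r)))%E.
  apply: le_g_Fu_g_f => // x xh _.
  have /d0_ball[[_ Dx] x_rho] : enorm x < d0 by rewrite -lte_fin (lt_le_trans xh).
  apply: (@le_trans _ _ (d x)%:E); first by rewrite lee_fin u_le_d.
  by apply: ereal_sup_ubound; exists x.
by split => //; exact: le_trans lower upper.
Qed.
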